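(* Let $S$ and $R$ be local rings with finite ideals $I_S\subset S$, $I_R\subset R$ such that $S/I_S\cong R/I_R\cong\mathbb Z_p$, and let $S\twoheadrightarrow R$ be a surjection with finite nonzero kernel $J$. Let $\tilde\Phi\subset\mathrm{GL}_2(\mathbb Z_p)$ be a finite subgroup of order prime to $p$ and let $\tilde\Gamma\subset\mathrm{GL}_2(R)$ be its inverse image under $\mathrm{GL}_2(R)\to\mathrm{GL}_2(\mathbb Z_p)$ (so $1\to 1+M_2(I_R)\to\tilde\Gamma\to\tilde\Phi\to1$). If $\Gamma_J\subset[\Gamma_S,\Gamma_S]\Gamma_S^p$, then there is no lift $\tilde\Gamma\to\mathrm{GL}_2(S)$.
   Context: For an ideal $I\subset S$, $\Gamma_I=1+M_2(I)$ and $\Gamma_S=1+M_2(I_S)$. A lift $\tilde\Gamma\to\mathrm{GL}_2(S)$ means a group homomorphism whose composition with $\mathrm{GL}_2(S)\to\mathrm{GL}_2(R)$ is the inclusion $\tilde\Gamma\subset\mathrm{GL}_2(R)$. *)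

From mathcomp Require Import all_boot all_algebra.
Set Implicit Arguments. Unset Strict Implicit. Unset Printing Implicit Defensive.
Import GRing.Theory.
Local Open Scope ring_scope.

Definition is_ideal (A : comNzRingType) (I : pred A) : Prop :=
  [/\ 0 \in I,
      (forall x y, x \in I -> y \in I -> x + y \in I) &
      (forall a x, x \in I -> a * x \in I)].

Definition finite_pred (T : eqType) (A : pred T) : Prop :=
  exists s : seq T, forall x, x \in A -> x \in s.

(* Local ring: (nonzero ring whose) non-units form an ideal, i.e. are closed
   under addition (closure under multiplication by scalars is automatic). *)
Definition is_local (A : comUnitRingType) : Prop :=
  forall x y : A, x \isn't a GRing.unit -> y \isn't a GRing.unit ->
    x + y \isn't a GRing.unit.

Definition kerp (A B : comUnitRingType) (f : {rmorphism A -> B}) : pred A :=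
  fun x => f x == 0.

(* f : A -> B is surjective with kernel I, i.e. induces A / I ~= B. *)
Definition quotient_map (A B : comUnitRingType) (f : {rmorphism A -> B})
  (I : pred A) : Prop :=
  (forall y : B, exists x : A, f x = y) /\ (forall x, (f x == 0) = (x \in I)).

(* Zp is (isomorphic to) the ring of p-adic integers: the inverse limit of
   the rings Z/p^(n+1) along the reduction maps, via projections pi n. *)
Definition is_padic_integers (p : nat) (Zp : comUnitRingType) : Prop :=
  exists pi : forall n : nat, {rmorphism Zp -> 'Z_(p ^ n.+1)},
    [/\ (forall n (x : Zp), (val (pi n x) = val (pi n.+1 x) %% p ^ n.+1)%N),
        (forall x y : Zp, (forall n, pi n x = pi n y) -> x = y) &
        (forall f : forall n : nat, 'Z_(p ^ n.+1),
           (forall n, (val (f n) = val (f n.+1) %% p ^ n.+1)%N) ->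
           exists x : Zp, forall n, pi n x = f n)].

Definition Gamma (A : comUnitRingType) (I : pred A) : pred 'M[A]_2 :=
  fun g => [forall i, [forall j, (g - 1) i j \in I]].

Inductive gen_group (G : unitRingType) (P : G -> Prop) : G -> Prop :=
| gg_base x : P x -> gen_group P x
| gg_one : gen_group P 1
| gg_mul x y : gen_group P x -> gen_group P y -> gen_group P (x * y)
| gg_inv x : gen_group P x -> gen_group P x^-1.

(* Generators of [Gamma, Gamma] Gamma^p : commutators and p-th powers. *)
Definition comm_pow_gens (G : unitRingType) (p : nat) (Gam : pred G) (g : G)
  : Prop :=
  (exists a b, [/\ a \in Gam, b \in Gam & g = a^-1 * b^-1 * a * b])
  \/ (exists a, a \in Gam /\ g = a ^+ p).

Definition finite_subgroup_GL2 (A : comUnitRingType) (s : seq 'M[A]_2) : Prop :=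
  [/\ uniq s, 1 \in s,
      (forall g, g \in s -> g \is a GRing.unit),
      (forall g h, g \in s -> h \in s -> g * h \in s) &
      (forall g, g \in s -> g^-1 \in s)].

Definition tildeGamma (R Zp : comUnitRingType) (piR : {rmorphism R -> Zp})
  (Phi : seq 'M[Zp]_2) : pred 'M[R]_2 :=
  fun g => (g \is a GRing.unit) && (map_mx piR g \in Phi).

Definition is_lift (S R : comUnitRingType) (phi : {rmorphism S -> R})
  (TG : pred 'M[R]_2) (rho : 'M[R]_2 -> 'M[S]_2) : Prop :=
  (forall g, g \in TG -> rho g \is a GRing.unit /\ map_mx phi (rho g) = g) /\
  (forall g h, g \in TG -> h \in TG -> rho (g * h) = rho g * rho h).

(* For w in Gamma_S let d(w) = w rho(phi w)^-1 - 1; it has entries in J.  Let m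
   be the kernel of S -> Z/p.  Modulo M_2(mJ), d is a homomorphism: it is a
   crossed homomorphism for conjugation by rho(phi x), which is congruent to 1
   modulo I_S and hence acts trivially on M_2(J/mJ).  As M_2(J/mJ) is abelian
   and killed by p, d vanishes modulo mJ on [Gamma_S, Gamma_S] Gamma_S^p, which
   contains Gamma_J.  But J is finite and nonzero, so by Nakayama some x in J
   lies outside mJ, and on g = 1 + x e_11 in Gamma_J we have rho(phi g) = 1,
   whence d(g) = x e_11. *)

From mathcomp Require Import all_boot all_algebra.
From Stdlib Require Import Classical.
Set Implicit Arguments.
Unset Strict Implicit.
Unset Printing Implicit Defensive.
Import GRing.Theory.
Local Open Scope ring_scope.

(* Ideals with undecidable membership, such as [mulspan m s] below. *)
Definition is_ideal_prop (A : comNzRingType) (I : A -> Prop) : Prop :=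
  [/\ I 0, forall x y, I x -> I y -> I (x + y) & forall a x, I x -> I (a * x)].

Lemma is_ideal_prop_pred (A : comNzRingType) (I : pred A) :
  is_ideal I -> is_ideal_prop (fun x => x \in I).
Proof. by []. Qed.

Lemma kerp_ideal (A B : comUnitRingType) (f : {rmorphism A -> B}) :
  is_ideal (kerp f).
Proof.
split=> [|x y|a x]; rewrite !unfold_in /kerp ?rmorph0 //.
  by move=> /eqP fx /eqP fy; rewrite rmorphD fx fy addr0.
by move=> /eqP fx; rewrite rmorphM fx mulr0.
Qed.

Definition entrywise (T : Type) (m n : nat) (P : T -> Prop) (A : 'M[T]_(m, n)) :=
  forall i j, P (A i j).

Section Entrywise.
Variables (S : comNzRingType) (K : S -> Prop).
Hypothesis idealK : is_ideal_prop K.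

Lemma entrywiseD m n (A B : 'M_(m, n)) :
  entrywise K A -> entrywise K B -> entrywise K (A + B).
Proof. by case: idealK => _ KD _ hA hB i j; rewrite mxE; apply: KD. Qed.

Lemma entrywiseN m n (A : 'M_(m, n)) : entrywise K A -> entrywise K (- A).
Proof. by case: idealK => _ _ KM hA i j; rewrite mxE -mulN1r; apply: KM. Qed.

Lemma entrywiseB m n (A B : 'M_(m, n)) :
  entrywise K A -> entrywise K B -> entrywise K (A - B).
Proof. by move=> hA hB; apply: entrywiseD => //; apply: entrywiseN. Qed.

Lemma entrywise_mulmx (P Q : S -> Prop) m n r (A : 'M_(m, n)) (B : 'M_(n, r)) :
  (forall a b, P a -> Q b -> K (a * b)) ->
  entrywise P A -> entrywise Q B -> entrywise K (A *m B).
Proof.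
case: idealK => K0 KD _ PQK hA hB i j; rewrite mxE.
by apply: (big_ind K) => // k _; apply: PQK.
Qed.

Lemma entrywise_mulmxl m n r (A : 'M_(m, n)) (B : 'M_(n, r)) :
  entrywise K A -> entrywise K (A *m B).
Proof.
case: idealK => _ _ KM hA; apply: (@entrywise_mulmx K (fun=> True)) hA _ => //.
by move=> a b Ka _; rewrite mulrC; apply: KM.
Qed.

Lemma entrywise_mulmxr m n r (A : 'M_(m, n)) (B : 'M_(n, r)) :
  entrywise K B -> entrywise K (A *m B).
Proof.
case: idealK => _ _ KM hB.
by apply: (@entrywise_mulmx (fun=> True) K) _ hB => // a b _; apply: KM.
Qed.

End Entrywise.

Definition mulspan (S : comNzRingType) (m : pred S) (s : seq S) (x : S) : Prop :=
  exists c : 'I_(size s) -> S, (forall k, c k \in m) /\ x = \sum_k c k * s`_k.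

Section MulSpan.
Variables (S : comNzRingType) (m : pred S) (s : seq S).
Hypothesis idealm : is_ideal m.

Lemma mulspan_ideal : is_ideal_prop (mulspan m s).
Proof.
case: idealm => m0 mD mM; split.
- by exists (fun=> 0); split=> //; rewrite big1 // => k _; rewrite mul0r.
- move=> x y [c [cm ->]] [d [dm ->]]; exists (fun k => c k + d k); split.
    by move=> k; apply: mD.
  by rewrite -big_split; apply: eq_bigr => k _; rewrite mulrDl.
- move=> a x [c [cm ->]]; exists (fun k => a * c k); split.
    by move=> k; apply: mM.
  by rewrite mulr_sumr; apply: eq_bigr => k _; rewrite mulrA.
Qed.

Lemma mulspan_mul a x : a \in m -> x \in s -> mulspan m s (a * x).
Proof.
case: idealm => m0 _ _ am xs.
have ks : (index x s < size s)%N by rewrite index_mem.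
exists (fun k => if k == Ordinal ks then a else 0); split.
  by move=> k; case: ifP.
rewrite (bigD1 (Ordinal ks)) //= eqxx nth_index // big1 ?addr0 // => k /negbTE->.
by rewrite mul0r.
Qed.

End MulSpan.

Lemma finite_predE (T : eqType) (A : pred T) :
  finite_pred A -> exists s : seq T, s =i A.
Proof.
by move=> [s sA]; exists (filter A s) => x; rewrite mem_filter andb_idr // => /sA.
Qed.

Lemma padic_residue (p : nat) (Zp : comUnitRingType) :
  prime p -> is_padic_integers p Zp ->
  exists r : {rmorphism Zp -> 'Z_(p ^ 1)}, r p%:R = 0.
Proof.
move=> p_prime [pi _]; exists (pi 0%N).
by rewrite rmorph_nat; exact: pchar_Zp (prime_gt1 p_prime).
Qed.

Lemma unit_of_rmorph_eq1 (S : comUnitRingType) (B : unitRingType)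
    (f : {rmorphism S -> B}) (y : S) :
  is_local S -> f y = 1 -> y \is a GRing.unit.
Proof.
move=> S_local fy1; apply/negPn/negP => y_nonunit.
have : 1 - y \isn't a GRing.unit.
  by apply: contraTN isT => /(rmorph_unit f); rewrite rmorphB rmorph1 fy1 subrr unitr0.
by move=> /(S_local _ _ y_nonunit); rewrite addrC subrK unitr1.
Qed.

Section Nakayama.
Variables (S B : comUnitRingType) (psi : {rmorphism S -> B}).
Hypothesis S_local : is_local S.

(* Determinant trick: [v = A v] with [A] zero modulo [ker psi] forces
   [det (1 - A) v = 0], and [det (1 - A)] is a unit since it maps to [1]. *)
Lemma nakayama (s : seq S) :
  {in s, forall x, mulspan (kerp psi) s x} -> {in s, forall x, x = 0}.
Proof.
move=> s_span; pose n := size s.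
have [c [c_ker s_eq]] : exists c : 'I_n -> 'I_n -> S,
    (forall i k, c i k \in kerp psi) /\ (forall i : 'I_n, s`_i = \sum_k c i k * s`_k).
  have [c cP] := fin_all_exists (fun i : 'I_n => s_span _ (mem_nth 0 (ltn_ord i))).
  by exists c; split=> [i k|i]; case: (cP i).
pose A := \matrix_(i, k) c i k; pose v : 'cV_n := \col_i s`_i.
have Av : (1%:M - A) *m v = 0.
  apply/matrixP => i j; rewrite mulmxBl mul1mx !mxE (s_eq i); apply/eqP.
  by rewrite subr_eq0; apply/eqP; apply: eq_bigr => k _; rewrite !mxE.
have det_unit : \det (1%:M - A) \is a GRing.unit.
  apply: (unit_of_rmorph_eq1 (f := psi) S_local).
  rewrite -det_map_mx map_mxB map_mx1 (_ : map_mx psi A = 0) ?subr0 ?det1 //.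
  by apply/matrixP => i k; rewrite !mxE; apply/eqP; apply: c_ker.
have det_v : \det (1%:M - A) *: v = 0.
  by rewrite -mul_scalar_mx -mul_adj_mx -mulmxA Av mulmx0.
have v0 : v = 0 by rewrite -[v]scale1r -(mulVr det_unit) -scalerA det_v scaler0.
move=> x xs; have ks : (index x s < n)%N by rewrite index_mem.
by have := congr1 (fun w : 'cV_n => w (Ordinal ks) 0) v0; rewrite !mxE /= nth_index.
Qed.

Lemma exists_not_mulspan (s : seq S) :
  (exists2 y, y \in s & y != 0) -> exists2 x, x \in s & ~ mulspan (kerp psi) s x.
Proof.
move=> [y ys y_neq0]; apply: NNPP => no_x.
have := nakayama (fun x xs => NNPP _ (fun nx => no_x (ex_intro2 _ _ x xs nx))).
by move=> /(_ y ys) y0; rewrite y0 eqxx in y_neq0.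
Qed.

End Nakayama.

Lemma lift_one (S R : comUnitRingType) (phi : {rmorphism S -> R})
    (TG : pred 'M[R]_2) (rho : 'M[R]_2 -> 'M[S]_2) :
  is_lift phi TG rho -> 1 \in TG -> rho 1 = 1.
Proof.
move=> [rho_unit rho_mul] TG1; have [rho1_unit _] := rho_unit _ TG1.
by apply: (mulrI rho1_unit); rewrite mulr1 -rho_mul ?mulr1.
Qed.

Lemma Gamma_subset (A : comUnitRingType) (I1 I2 : pred A) :
  {subset I1 <= I2} -> {subset Gamma I1 <= Gamma I2}.
Proof.
move=> I12 w /forallP w_I1; apply/forallP => i; apply/forallP => j.
by apply: I12; have /forallP := w_I1 i.
Qed.

Section CongruenceKernel.
Variables (S T : comUnitRingType) (pi : {rmorphism S -> T}).
Hypothesis S_local : is_local S.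

Lemma Gamma_kerpE w : (w \in Gamma (kerp pi)) = (map_mx pi w == 1).
Proof.
rewrite -subr_eq0 -[1](rmorph1 (map_mx pi)) -rmorphB.
apply/forallP/eqP => [w_ker | /matrixP w_ker i].
  apply/matrixP => i j; have /forallP/(_ j) := w_ker i.
  by rewrite unfold_in /kerp !mxE => /eqP.
by apply/forallP => j; have := w_ker i j; rewrite unfold_in /kerp !mxE => ->.
Qed.

Lemma Gamma_kerp_unit w : w \in Gamma (kerp pi) -> w \is a GRing.unit.
Proof.
rewrite Gamma_kerpE unitmxE => /eqP w1.
by apply: (unit_of_rmorph_eq1 (f := pi) S_local); rewrite -det_map_mx w1 det1.
Qed.

Lemma Gamma_kerp1 : 1 \in Gamma (kerp pi).
Proof. by rewrite Gamma_kerpE rmorph1. Qed.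

Lemma Gamma_kerpM : {in Gamma (kerp pi) &, forall a b, a * b \in Gamma (kerp pi)}.
Proof.
by move=> a b; rewrite !Gamma_kerpE rmorphM /= => /eqP-> /eqP->; rewrite mulr1.
Qed.

Lemma Gamma_kerpV : {in Gamma (kerp pi), forall a, a^-1 \in Gamma (kerp pi)}.
Proof.
move=> a a_in; have a_unit := Gamma_kerp_unit a_in.
by move: a_in; rewrite !Gamma_kerpE rmorphV //= => /eqP->; rewrite invr1.
Qed.

End CongruenceKernel.

Lemma gen_group_sub (G : unitRingType) (H : pred G) (P : G -> Prop) :
  1 \in H -> {in H &, forall x y, x * y \in H} -> {in H, forall x, x^-1 \in H} ->
  (forall x, P x -> x \in H) -> forall x, gen_group P x -> x \in H.
Proof.
by move=> H1 HM HV PH x; elim=> {x} *; [apply: PH | | apply: HM | apply: HV].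
Qed.

Section HomomorphismModulo.
Variables (G : unitRingType) (V : zmodType) (H : pred G) (K : V -> Prop).
Hypotheses (H1 : 1 \in H) (HM : {in H &, forall x y, x * y \in H})
  (HV : {in H, forall x, x^-1 \in H}) (H_unit : {subset H <= GRing.unit}).
Hypotheses (KD : forall u v, K u -> K v -> K (u + v))
  (KN : forall u, K u -> K (- u)).
Variable F : G -> V.
Hypothesis F_mul : {in H &, forall x y, K (F (x * y) - (F x + F y))}.

Let KB u v : K u -> K v -> K (u - v).
Proof. by move=> Ku Kv; apply: KD => //; apply: KN. Qed.

Lemma hom_modulo1 : K (F 1).
Proof.
have := F_mul H1 H1; rewrite mulr1 opprD addrA subrr sub0r.
by move=> /KN; rewrite opprK.
Qed.

Lemma hom_moduloV x : x \in H -> K (F x^-1 + F x).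
Proof.
move=> Hx; have := KB hom_modulo1 (F_mul (HV Hx) Hx).
by rewrite mulVr ?H_unit // opprB addrC subrK.
Qed.

Lemma hom_modulo_prod (s : seq G) : all (mem H) s ->
  K (F (\prod_(x <- s) x) - \sum_(x <- s) F x).
Proof.
elim: s => [_|x s IHs /= /andP[Hx Hs]].
  by rewrite !big_nil subr0; apply: hom_modulo1.
have Hprod : \prod_(y <- s) y \in H.
  by rewrite big_seq; apply: (big_ind (fun y => y \in H)) => // y; apply: (allP Hs).
have := KD (F_mul Hx Hprod) (IHs Hs).
by rewrite !big_cons !opprD !addrA subrK.
Qed.

Lemma hom_modulo_comm x y : x \in H -> y \in H -> K (F (x^-1 * y^-1 * x * y)).
Proof.
move=> Hx Hy; have Hs : all (mem H) [:: x^-1; y^-1; x; y] by rewrite /= Hx Hy !HV.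
have := KD (hom_modulo_prod Hs) (KD (hom_moduloV Hx) (hom_moduloV Hy)).
rewrite !big_cons !big_nil mulr1 !mulrA addr0.
by rewrite [F y^-1 + _]addrCA [F x^-1 + (_ + _)]addrA subrK.
Qed.

Lemma hom_moduloX x k : x \in H -> K (F (x ^+ k) - F x *+ k).
Proof.
move=> Hx; have Hs : all (mem H) (nseq k x) by apply/allP => y /nseqP[->].
by have := hom_modulo_prod Hs; rewrite !big_nseq iter_mulr iter_addr mulr1 addr0.
Qed.

Let HX x k : x \in H -> x ^+ k \in H.
Proof. by move=> Hx; elim: k => [|k IHk]; rewrite ?expr0 ?exprS ?HM. Qed.

Lemma hom_modulo_gen_group (p : nat) (Gam : pred G) :
  {subset Gam <= H} -> {in Gam, forall x, K (F x *+ p)} ->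
  forall w, gen_group (comm_pow_gens p Gam) w -> K (F w).
Proof.
move=> GamH Kp; have gensH x : comm_pow_gens p Gam x -> x \in H.
  by case=> [[a [b [Ga Gb ->]]] | [a [Ga ->]]]; rewrite ?HX ?HM ?HV ?GamH.
have genH := gen_group_sub H1 HM HV gensH.
move=> w; elim=> {w}
  [x [[a [b [Ga Gb ->]]] | [a [Ga ->]]] | | x y Gx Kx Gy Ky | x Gx Kx].
- exact: hom_modulo_comm (GamH _ Ga) (GamH _ Gb).
- by have := KD (hom_moduloX p (GamH _ Ga)) (Kp _ Ga); rewrite subrK.
- exact: hom_modulo1.
- by have := KD (F_mul (genH _ Gx) (genH _ Gy)) (KD Kx Ky); rewrite subrK.
- by have := KB (hom_moduloV (genH _ Gx)) Kx; rewrite addrK.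
Qed.

End HomomorphismModulo.

Lemma mulr1D_sub (A : pzRingType) (a b c : A) :
  (1 + a) * (1 + b) - 1 - (a + c) = a * b + (b - c).
Proof.
rewrite mulrDr mulr1 [_ + _ - 1]addrAC [1 + a]addrC addrK addrC addrKA.
by rewrite mulrDl mul1r addrA.
Qed.

Definition lift_defect (A : unitRingType) (h : A -> A) (w : A) : A :=
  w * (h w)^-1 - 1.

Section LiftDefect.
Variables (S T : comUnitRingType) (pi : {rmorphism S -> T}) (J K : S -> Prop).
Hypotheses (S_local : is_local S) (idealJ : is_ideal_prop J)
  (idealK : is_ideal_prop K) (J_ker : forall b, J b -> b \in kerp pi)
  (kerJ_K : forall a b, a \in kerp pi -> J b -> K (a * b)).

Let JJ_K a b : J a -> J b -> K (a * b).
Proof. by move=> Ja; apply: kerJ_K (J_ker Ja). Qed.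

Let Gamma_entrywise H : H \in Gamma (kerp pi) ->
  entrywise (fun a => a \in kerp pi) (H - 1).
Proof. by move=> /forallP H_ker i j; have /forallP := H_ker i. Qed.

Lemma Gamma_conj_sub H A : H \in Gamma (kerp pi) -> entrywise J A ->
  entrywise K (H * A * H^-1 - A).
Proof.
move=> H_Gamma JA; have H_unit := Gamma_kerp_unit S_local H_Gamma.
have -> : H * A * H^-1 - A = ((H - 1) * A - A * (H - 1)) * H^-1.
  by rewrite mulrBl mulrBr !mulrBl mul1r mulr1 opprB addrA subrK mulrK.
apply: entrywise_mulmxl => //; apply: entrywiseB => //.
  exact: entrywise_mulmx kerJ_K (Gamma_entrywise H_Gamma) JA.
apply: (entrywise_mulmx _ _ JA (Gamma_entrywise H_Gamma)) => // b a Jb a_ker.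
by rewrite mulrC; apply: kerJ_K.
Qed.

Variable h : 'M[S]_2 -> 'M[S]_2.
Hypotheses (h_Gamma : {in Gamma (kerp pi), forall w, h w \in Gamma (kerp pi)})
  (h_mul : {in Gamma (kerp pi) &, {morph h : x y / x * y}})
  (defect_J : {in Gamma (kerp pi), forall w, entrywise J (lift_defect h w)}).

(* [u(w) = w h(w)^-1] satisfies [u(x y) = u(x) h(x) u(y) h(x)^-1], and
   conjugation by [h(x)], congruent to 1 modulo [ker pi], is trivial modulo [K]. *)
Lemma lift_defect_mul : {in Gamma (kerp pi) &, forall x y,
  entrywise K (lift_defect h (x * y) - (lift_defect h x + lift_defect h y))}.
Proof.
move=> x y Gx Gy; have [hGx hGy] := (h_Gamma Gx, h_Gamma Gy).
have [hx_unit hy_unit] := (Gamma_kerp_unit S_local hGx, Gamma_kerp_unit S_local hGy).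
have dE w : 1 + lift_defect h w = w * (h w)^-1 by rewrite addrC subrK.
set H := h x; set B := H * lift_defect h y * H^-1.
have -> : lift_defect h (x * y) = (1 + lift_defect h x) * (1 + B) - 1.
  have -> : 1 + B = H * (y * (h y)^-1) * H^-1 by rewrite -dE mulrDr mulr1 mulrDl divrr.
  by rewrite dE /lift_defect h_mul // invrM // !mulrA -/H divrK.
rewrite mulr1D_sub; apply: entrywiseD => //; last exact: Gamma_conj_sub (defect_J Gy).
apply: (entrywise_mulmx _ JJ_K (defect_J Gx)) => //.
by apply: entrywise_mulmxl => //; apply: entrywise_mulmxr => //; apply: defect_J.
Qed.

Lemma lift_defect_gen_group (p : nat) (Gam : pred 'M[S]_2) :
  {subset Gam <= Gamma (kerp pi)} -> (forall b, J b -> K (p%:R * b)) ->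
  forall w, gen_group (comm_pow_gens p Gam) w -> entrywise K (lift_defect h w).
Proof.
move=> GamG pJ_K; apply: (hom_modulo_gen_group (Gamma_kerp1 pi) (@Gamma_kerpM _ _ pi)
  (Gamma_kerpV S_local) (Gamma_kerp_unit S_local) (@entrywiseD _ _ idealK 2 2)
  (@entrywiseN _ _ idealK 2 2) lift_defect_mul GamG).
move=> x /GamG Gx i j; rewrite mulmxnE -mulr_natl; apply: pJ_K.
exact: defect_J.
Qed.

End LiftDefect.

Section LiftRestriction.
Variables (S R Z : comUnitRingType) (phi : {rmorphism S -> R}).
Variables (piS : {rmorphism S -> Z}) (piR : {rmorphism R -> Z}).
Variables (Phi : seq 'M[Z]_2) (rho : 'M[R]_2 -> 'M[S]_2).
Hypotheses (S_local : is_local S) (compat : forall x, piR (phi x) = piS x)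
  (Phi1 : 1 \in Phi) (rho_lift : is_lift phi (tildeGamma piR Phi) rho).

Let map_compat (w : 'M[S]_2) : map_mx piR (map_mx phi w) = map_mx piS w.
Proof. by apply/matrixP => i j; rewrite !mxE compat. Qed.

Lemma Gamma_tildeGamma w :
  w \in Gamma (kerp piS) -> map_mx phi w \in tildeGamma piR Phi.
Proof.
move=> Gw; rewrite unfold_in /tildeGamma map_compat.
rewrite (rmorph_unit (map_mx phi)) ?(Gamma_kerp_unit S_local Gw) //=.
by move: Gw; rewrite Gamma_kerpE => /eqP->.
Qed.

Lemma lift_Gamma w : w \in Gamma (kerp piS) -> rho (map_mx phi w) \in Gamma (kerp piS).
Proof.
move=> Gw; have [_ rho_phi] := rho_lift.1 _ (Gamma_tildeGamma Gw).
by rewrite Gamma_kerpE -map_compat rho_phi map_compat -Gamma_kerpE.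
Qed.

Lemma lift_mul : {in Gamma (kerp piS) &,
  {morph (fun w => rho (map_mx phi w)) : x y / x * y}}.
Proof. by move=> x y Gx Gy /=; rewrite rmorphM rho_lift.2 ?Gamma_tildeGamma. Qed.

Lemma lift_defect_ker w : w \in Gamma (kerp piS) ->
  entrywise (fun b => b \in kerp phi)
    (lift_defect (fun w => rho (map_mx phi w)) w).
Proof.
move=> Gw; have TGw := Gamma_tildeGamma Gw; have [rho_unit rho_phi] := rho_lift.1 _ TGw.
have : map_mx phi (lift_defect (fun w => rho (map_mx phi w)) w) = 0.
  rewrite /lift_defect rmorphB rmorphM rmorphV //= rho_phi rmorph1 mulrV ?subrr //.
  by move: TGw; rewrite unfold_in => /andP[].
by move=> /matrixP defect0 i j; have := defect0 i j; rewrite !mxE unfold_in /kerp => ->.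
Qed.

Lemma lift_defect_map1 g : map_mx phi g = 1 ->
  lift_defect (fun w => rho (map_mx phi w)) g = g - 1.
Proof.
move=> phi_g; rewrite /lift_defect phi_g (lift_one rho_lift) ?invr1 ?mulr1 //.
by rewrite unfold_in /tildeGamma unitr1 rmorph1.
Qed.

End LiftRestriction.

Theorem mainTheorem12 (p : nat) (p_prime : prime p)
  (Zp : comUnitRingType) (hZp : is_padic_integers p Zp)
  (S R : comUnitRingType) (hS : is_local S) (hR : is_local R)
  (IS : pred S) (IR : pred R)
  (hIS : is_ideal IS) (hIR : is_ideal IR)
  (fIS : finite_pred IS) (fIR : finite_pred IR)
  (piS : {rmorphism S -> Zp}) (piR : {rmorphism R -> Zp})
  (hpiS : quotient_map piS IS) (hpiR : quotient_map piR IR)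
  (phi : {rmorphism S -> R}) (phi_surj : forall y : R, exists x : S, phi x = y)
  (hcompat : forall x : S, piR (phi x) = piS x)
  (fJ : finite_pred (kerp phi)) (nzJ : exists x : S, x != 0 /\ phi x = 0)
  (Phi : seq 'M[Zp]_2) (hPhi : finite_subgroup_GL2 Phi)
  (hord : coprime (size Phi) p)
  (hJ : forall g, g \in Gamma (kerp phi) ->
          gen_group (comm_pow_gens p (Gamma IS)) g) :
  ~ exists rho : 'M[R]_2 -> 'M[S]_2, is_lift phi (tildeGamma piR Phi) rho.
Proof.
move=> [rho rho_lift]; have [_ Phi1 _ _ _] := hPhi; have [_ piS_ker] := hpiS.
have [r r_p] := padic_residue p_prime hZp; pose psi := (r \o piS : {rmorphism S -> _}).
have [js js_J] := finite_predE fJ.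
have [x x_js x_notK] : exists2 x, x \in js & ~ mulspan (kerp psi) js x.
  apply: (exists_not_mulspan psi hS); have [y [y_neq0 y_J]] := nzJ.
  by exists y; rewrite // js_J unfold_in /kerp y_J.
have kerS_psi a : a \in kerp piS -> a \in kerp psi.
  by rewrite !unfold_in /kerp /= => /eqP->; rewrite rmorph0.
have J_kerS b : b \in kerp phi -> b \in kerp piS.
  by rewrite !unfold_in /kerp -hcompat => /eqP->; rewrite rmorph0.
have psiJ_K a b : a \in kerp psi -> b \in kerp phi -> mulspan (kerp psi) js (a * b).
  by move=> a_psi b_J; apply: (mulspan_mul (kerp_ideal psi)); rewrite ?js_J.
have p_psi : p%:R \in kerp psi by rewrite unfold_in /kerp /= rmorph_nat r_p.
have IS_kerS : {subset IS <= kerp piS}.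
  by move=> a a_IS; rewrite unfold_in /kerp piS_ker.
have K_defect := lift_defect_gen_group hS (is_ideal_prop_pred (kerp_ideal phi))
  (mulspan_ideal js (kerp_ideal psi)) J_kerS
  (fun a b a_S => psiJ_K a b (kerS_psi a a_S))
  (lift_Gamma hS hcompat Phi1 rho_lift) (lift_mul hS hcompat Phi1 rho_lift)
  (lift_defect_ker hS hcompat Phi1 rho_lift) (Gamma_subset IS_kerS)
  (fun b => psiJ_K _ b p_psi).
pose g : 'M[S]_2 := 1 + x *: delta_mx 0 0.
have phi_g : map_mx phi g = 1.
  move: x_js; rewrite js_J unfold_in /kerp => /eqP phi_x.
  by rewrite rmorphD rmorph1 /= map_mxZ phi_x scale0r addr0.
have g_J : g \in Gamma (kerp phi) by rewrite Gamma_kerpE phi_g.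
apply: x_notK; have := K_defect _ (hJ _ g_J) 0 0.
by rewrite (lift_defect_map1 Phi1 rho_lift) // /g addrAC subrr add0r !mxE mulr1.
Qed.
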